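(* Let $\mathcal{L}=(\mathrm{Fm},\vdash)$ be a selfextensional logic for which property $\neg_A$ holds, let $N\subseteq\mathrm{Fm}\times\mathrm{Fm}$ be a normative system, (R) any rule, and $P\subseteq\mathrm{Fm}\times\mathrm{Fm}$ any permission system. Then $S^{(\mathrm{R})}(P,N)\subseteq_c D^{(\mathrm{R})}(P,N)$.
   Context: $Cn(\Gamma)=\{\psi\mid\Gamma\vdash\psi\}$, $Cn(\alpha)=Cn(\{\alpha\})$, $Cn(\varphi,\psi)=Cn(\{\varphi,\psi\})$. $\neg_W$: a unary term $\neg$ such that $\psi\in Cn(\varphi)$ implies $\neg\varphi\in Cn(\neg\psi)$; $\neg_A$ (for such $\neg$): $Cn(\varphi,\neg\varphi)=\mathrm{Fm}$ for all $\varphi$. For a rule (R) on relations $\subseteq\mathrm{Fm}\times\mathrm{Fm}$, $N^{(\mathrm{R})}$ is the smallest extension of $N$ closed under (R) and $N^{(\mathrm{R})}_{(\alpha,\varphi)}$ the smallest extension of $N\cup\{(\alpha,\varphi)\}$ closed under (R). $S^{(\mathrm{R})}(P,N)=\bigcup\{N^{(\mathrm{R})}_{(\alpha,\varphi)}\mid(\alpha,\varphi)\in P\}$ if $P\neq\varnothing$, and $N^{(\mathrm{R})}$ otherwise. Dynamic positive permission: $D^{(\mathrm{R})}(P,N)=\{(\alpha,\varphi)\mid\exists\gamma\exists\psi\exists\varphi'\exists\psi'(Cn(\gamma)\neq\mathrm{Fm}\ \&\ (\gamma,\psi)\in S^{(\mathrm{R})}(P,N)\ \&\ Cn(\psi,\psi')=\mathrm{Fm}=Cn(\varphi,\varphi')\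 \&\ (\gamma,\psi')\in N^{(\mathrm{R})}_{(\alpha,\varphi')})\}$. $M\subseteq_c M'$ means: $(\alpha,\varphi)\in M$ and $Cn(\alpha)\neq\mathrm{Fm}$ imply $(\alpha,\varphi)\in M'$. *)

From mathcomp Require Import all_boot.
Set Implicit Arguments.
Unset Strict Implicit.
Unset Printing Implicit Defensive.

Section Language.
Variables (Op : Type) (ar : Op -> nat).

Inductive Fm : Type :=
| Var : nat -> Fm
| App : forall c : Op, ('I_(ar c) -> Fm) -> Fm.

Fixpoint subst (s : nat -> Fm) (t : Fm) : Fm :=
  match t with
  | Var n => s n
  | App c a => @App c (fun i => subst s (a i))
  end.

Definition fset := Fm -> Prop.
Definition single (a : Fm) : fset := fun x => x = a.
Definition pair (a b : Fm) : fset := fun x => x = a \/ x = b.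

Record Logic := {
  vdash : fset -> Fm -> Prop;
  vdash_refl : forall (G : fset) a, G a -> vdash G a;
  vdash_mono : forall (G D : fset) a, (forall x, G x -> D x) -> vdash G a -> vdash D a;
  vdash_cut : forall (G D : fset) a,
      (forall x, D x -> vdash G x) -> vdash D a -> vdash G a;
  vdash_struct : forall (s : nat -> Fm) (G : fset) a,
      vdash G a -> vdash (fun y => exists x, G x /\ y = subst s x) (subst s a)
}.

Variable L : Logic.

Definition Cn (G : fset) : fset := fun psi => vdash L G psi.
Definition Cn_full (G : fset) : Prop := forall psi, Cn G psi.

Definition interderivable (a b : Fm) : Prop :=
  vdash L (single a) b /\ vdash L (single b) a.

Definition selfextensional : Prop :=
  forall (c : Op) (a b : 'I_(ar c) -> Fm),
    (forall i, interderivable (a i) (b i)) -> interderivable (@App c a) (@App c b).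

(* A unary term t(p) (p = any variable; all variables are identified with
   the argument), applied to a formula *)
Definition app_unary (t : Fm) (phi : Fm) : Fm := subst (fun _ => phi) t.

Definition neg_W (t : Fm) : Prop :=
  forall phi psi, Cn (single phi) psi ->
    Cn (single (app_unary t psi)) (app_unary t phi).

Definition neg_A (t : Fm) : Prop :=
  forall phi, Cn_full (pair phi (app_unary t phi)).

Definition has_neg_A : Prop := exists t, neg_W t /\ neg_A t.

Definition nrel := Fm * Fm -> Prop.

(* A rule: a set of instances (premises, conclusion) *)
Definition Rule := nrel -> Fm * Fm -> Prop.

Definition closed_under (R : Rule) (M : nrel) : Prop :=
  forall (Prem : nrel) (c : Fm * Fm), R Prem c -> (forall q, Prem q -> M q) -> M c.

Definition closure (R : Rule) (M : nrel) : nrel :=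
  fun p => forall M' : nrel, (forall q, M q -> M' q) -> closed_under R M' -> M' p.

Definition NR (R : Rule) (N : nrel) : nrel := closure R N.
Definition NRp (R : Rule) (N : nrel) (q : Fm * Fm) : nrel :=
  closure R (fun p => N p \/ p = q).

Definition SR (R : Rule) (P N : nrel) : nrel :=
  fun p => ((exists q, P q) /\ exists q, P q /\ NRp R N q p)
        \/ ((~ exists q, P q) /\ NR R N p).

Definition DR (R : Rule) (P N : nrel) : nrel :=
  fun p => exists gamma psi phi' psi',
    ~ Cn_full (single gamma) /\
    SR R P N (gamma, psi) /\
    Cn_full (pair psi psi') /\ Cn_full (pair p.2 phi') /\
    NRp R N (p.1, phi') (gamma, psi').

Definition subset_c (M M' : nrel) : Prop :=
  forall alpha phi, M (alpha, phi) -> ~ Cn_full (single alpha) -> M' (alpha, phi).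

End Language.

From Pilot Require Import Defs.
From mathcomp Require Import all_boot.

Section DynamicPermission.
Variables (Op : Type) (ar : Op -> nat).

Lemma closure_base (R : Rule ar) (M : nrel ar) p : M p -> Defs.closure R M p.
Proof. by move=> Mp M' sub_MM' _; apply: sub_MM'. Qed.

Lemma NRp_generator (R : Rule ar) (N : nrel ar) q : NRp R N q q.
Proof. by apply: closure_base; right. Qed.

(* Witness: gamma := alpha, psi := phi and phi' = psi' := t phi; then
   (gamma, psi') = (alpha, t phi) is the generator of N^(R)_(alpha, t phi). *)
Lemma SR_subset_c_DR (L : Logic ar) (t : Fm ar) (R : Rule ar) (P N : nrel ar) :
  neg_A L t -> subset_c L (SR R P N) (DR L R P N).
Proof.
move=> negAt alpha phi S_alpha_phi alpha_consistent.
exists alpha, phi, (app_unary t phi), (app_unary t phi).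
split; first exact: alpha_consistent.
split; first exact: S_alpha_phi.
split; first exact: negAt.
split; first exact: negAt.
exact: NRp_generator.
Qed.

End DynamicPermission.

Theorem lemma4p16 (Op : Type) (ar : Op -> nat) (L : Logic ar)
  (Hself : selfextensional L) (Hneg : has_neg_A L)
  (N : nrel ar) (R : Rule ar) (P : nrel ar) :
  subset_c L (SR R P N) (DR L R P N).
Proof.
case: Hneg => t [_ negAt].
exact: SR_subset_c_DR negAt.
Qed.
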